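(* Let $(V,E^+\uplus E^-)$ be a Correlation Clustering instance with optimum cost $\mathrm{opt}$, let $\mathcal C$ be a clustering of $V$ with $\mathrm{obj}(\mathcal C)\le3\,\mathrm{opt}$, and let $\mathcal K$ be the partition of $V$ constructed from $\mathcal C$ as described in the context (with $\beta=0.1$). Let $\mathcal C^*$ be an optimum clustering (i.e. $\mathrm{obj}(\mathcal C^* )=\mathrm{opt}$). Then every atom $K\in\mathcal K$ is contained in a single cluster of $\mathcal C^*$.
   Context: A Correlation Clustering instance consists of a finite vertex set $V$ and a partition $E^+\uplus E^-=\binom V2$ of unordered pairs of distinct vertices into $+$edges and $-$edges. For a clustering (partition) $\mathcal C$ of $V$, $\mathrm{obj}(\mathcal C)$ is the number of $+$edges between different parts plus the number of $-$edges inside parts; $\mathrm{opt}$ is its minimum. By convention every vertex has a $+$ self-loop, so the set $N^+_u$ of $+$neighbours of $u$ contains $u$. $A\triangle B$ denotes symmetric difference. Construction of $\mathcal K$ with $\beta=0.1$: for every non-singleton $C\in\mathcal C$, mark every $u\in C$ with $|N^+_u\triangle C|>\frac\beta2|C|$, and then, if at least $\frac{\beta|C|}{3}$ vertices of $C$ are marked, mark all vertices of $C$. $\mathcal K$ is obtained from $\mathcal C$ by removing every marked vertex from its cluster and making it a singleton cluster. The parts of $\mathcal K$ are called atoms. *)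

From mathcomp Require Import all_boot.
Set Implicit Arguments. Unset Strict Implicit. Unset Printing Implicit Defensive.

(* A Correlation Clustering instance: vertex set V (a finType) and a
   symmetric relation [plus] on V; for u != v, {u,v} is a +edge iff plus u v,
   and a -edge otherwise.  The value of plus on the diagonal is irrelevant. *)

Section CC.
Variables (V : finType) (plus : rel V).

Definition disagree (P : {set {set V}}) (u v : V) : bool :=
  if plus u v then pblock P u != pblock P v else pblock P u == pblock P v.

Definition obj (P : {set {set V}}) : nat :=
  #|[set e : {set V} | [exists u, exists v,
        [&& e == [set u; v], u != v & disagree P u v]]]|.

Definition optimal (P : {set {set V}}) : Prop :=
  partition P [set: V] /\
  forall Q : {set {set V}}, partition Q [set: V] -> obj P <= obj Q.

Definition Nplus (u : V) : {set V} := [set v | (v == u) || plus u v].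

Definition symdiff (A B : {set V}) : {set V} := (A :\: B) :|: (B :\: A).

(* first marking step, beta = 1/10: |N+_u \triangle C| > (beta/2)|C| *)
Definition marked1 (C : {set V}) (u : V) : bool :=
  #|C| < 20 * #|symdiff (Nplus u) C|.

(* final marking: C = cluster of u, non-singleton; u marked, or at least
   beta|C|/3 vertices of C are marked in the first step *)
Definition marked (P : {set {set V}}) (u : V) : bool :=
  let C := pblock P u in
  (1 < #|C|) &&
  (marked1 C u || (#|C| <= 30 * #|[set w in C | marked1 C w]|)).

Definition atoms (P : {set {set V}}) : {set {set V}} :=
  [set K | K != set0 &
     [exists C in P, K == [set w in C | ~~ marked P w]]]
  :|: [set [set u] | u in [set u | marked P u]].

End CC.

(* A non-singleton atom K is the unmarked part of a cluster C0 of C, so every x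
   in K has |N+_x △ C0| <= |C0|/20, and |C0 \ K| < |C0|/30.  We compare C*
   with local modifications of it, counting disagreements over ordered pairs.
   If every class of C* misses at least |C0|/6 vertices of K, making K a
   cluster of its own strictly lowers the cost.  Otherwise pick s0 in K whose
   class is dominant, and let S = K ∩ [s0] and T = K \ [s0].  Splitting S off
   [s0] cannot lower the cost, so some s in S has at least as many +edges as
   -edges to [s0] \ K; since both s and every t in T are +adjacent to almost
   all of C0, moving T into [s0] then strictly lowers the cost unless T is
   empty. *)

From mathcomp Require Import all_boot zify.
Set Implicit Arguments. Unset Strict Implicit. Unset Printing Implicit Defensive.

Section Sums.
Variable T : finType.

Lemma sum_mem_card (A : {set T}) : \sum_v (v \in A : nat) = #|A|.
Proof. by rewrite -sum1_card [RHS]big_mkcond. Qed.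

Lemma sum_lt_on (P : pred T) (F G : T -> nat) x0 :
  P x0 -> (forall u, P u -> F u < G u) -> (forall u, ~~ P u -> F u = 0) ->
  \sum_u F u < \sum_u G u.
Proof.
move=> Px0 ltFG F0; rewrite (bigD1 x0) //= [X in _ < X](bigD1 x0) //=.
rewrite -addSn leq_add ?ltFG // leq_sum // => u _.
by case: (boolP (P u)) => [/ltFG/ltnW | /F0 ->].
Qed.

Lemma sum2_addT (F G : T -> T -> nat) :
  \sum_u \sum_v (F u v + G v u) = \sum_u \sum_v (F u v + G u v).
Proof.
under eq_bigr do rewrite big_split; under [RHS]eq_bigr do rewrite big_split.
by rewrite !big_split /= [X in _ + X]exchange_big.
Qed.

Lemma sum2_symmetrize (F : T -> T -> nat) :
  \sum_u \sum_v (F u v + F v u) = 2 * \sum_u \sum_v F u v.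
Proof.
rewrite sum2_addT; under eq_bigr do rewrite big_split.
by rewrite big_split /= addnn -mul2n.
Qed.

End Sums.

Section RelationCost.
Variables (V : finType) (plus : rel V).
Hypothesis plus_sym : symmetric plus.

Definition rdisagree (r : rel V) (u v : V) : bool :=
  (u != v) && (if plus u v then ~~ r u v else r u v).

Definition rcost (r : rel V) : nat := \sum_u \sum_v rdisagree r u v.

Definition same_block (P : {set {set V}}) : rel V :=
  fun u v => pblock P u == pblock P v.

Lemma rcost_pointwise (r r' : rel V) (Pos Neg : V -> V -> nat) :
  (forall u v, rdisagree r' u v + Pos u v <= rdisagree r u v + Neg u v) ->
  rcost r' + \sum_u \sum_v Pos u v <= rcost r + \sum_u \sum_v Neg u v.
Proof.
move=> le_uv; rewrite /rcost -!big_split leq_sum // => u _.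
by rewrite -!big_split leq_sum.
Qed.

Lemma obj_rcost P : 2 * obj plus P = rcost (same_block P).
Proof.
rewrite /rcost pair_bigA /=.
set Pr := [set p : V * V | (p.1 != p.2) && disagree plus P p.1 p.2].
have -> : \sum_p rdisagree (same_block P) p.1 p.2 = #|Pr|.
  by rewrite -sum1_card [RHS]big_mkcond; apply: eq_bigr => p _; rewrite inE.
rewrite /obj; set E := [set e : {set V} | _].
rewrite -[#|Pr|]sum1_card (partition_big (fun p => [set p.1; p.2]) (mem E)) /=;
  last first.
  move=> [a b]; rewrite !inE /= => /andP [ab dab].
  by apply/existsP; exists a; apply/existsP; exists b; rewrite eqxx ab dab.
rewrite mulnC -sum_nat_const; apply: eq_bigr => e.
rewrite inE => /existsP [u /existsP [v /and3P [/eqP -> uv duv]]].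
have dvu : disagree plus P v u by rewrite /disagree plus_sym eq_sym.
rewrite sum1_card (@eq_card _ _ [set (u, v); (v, u)]); last first.
  move=> [a b]; rewrite !inE /= !xpair_eqE unfold_in /= inE /=.
  apply/andP/idP => [[/andP [ab _] /eqP Eab] | /orP [] /andP [/eqP -> /eqP ->]].
  - have : a \in [set u; v] by rewrite -Eab !inE eqxx.
    have : b \in [set u; v] by rewrite -Eab !inE eqxx orbT.
    by rewrite !inE => /orP [] /eqP eb /orP [] /eqP ea; move: ab;
      rewrite ea eb ?eqxx ?orbT.
  - by rewrite uv duv.
  - by rewrite eq_sym uv dvu setUC.
by rewrite cards2 xpair_eqE negb_and uv.
Qed.

Lemma mem_symdiff_Nplus (A : {set V}) x v :
  v != x -> (v \in symdiff (Nplus plus x) A) = (plus x v != (v \in A)).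
Proof.
move=> vx; rewrite /symdiff /Nplus !inE (negbTE vx) /=.
by case: (plus x v); case: (v \in A).
Qed.

End RelationCost.

Section Isolate.
Variables (V : finType) (r : rel V).
Hypotheses (r_refl : reflexive r) (r_sym : symmetric r) (r_trans : transitive r).

Definition isolate (P : pred V) : rel V :=
  fun u v => (P u == P v) && (P u || r u v).

Lemma isolate_refl P : reflexive (isolate P).
Proof. by move=> u; rewrite /isolate eqxx r_refl orbT. Qed.

Lemma isolate_sym P : symmetric (isolate P).
Proof. by move=> u v; rewrite /isolate eq_sym r_sym; case: (P u); case: (P v). Qed.

Lemma isolate_trans P : transitive (isolate P).
Proof.
move=> v u w; rewrite /isolate.
by case: (P u); case: (P v); case: (P w) => //=; apply: r_trans.
Qed.

End Isolate.

Section CoreInOneClass.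
Variables (V : finType) (plus : rel V).
Hypothesis plus_sym : symmetric plus.
Variable r : rel V.
Hypotheses (r_refl : reflexive r) (r_sym : symmetric r) (r_trans : transitive r).
Hypothesis r_opt : forall r' : rel V,
  reflexive r' -> symmetric r' -> transitive r' -> rcost plus r <= rcost plus r'.
Variables (C0 K : {set V}).
Hypothesis KC0 : K \subset C0.
Hypothesis K_large : 30 * #|C0 :\: K| < #|C0|.
Hypothesis K_close :
  forall x, x \in K -> 20 * #|symdiff (Nplus plus x) C0| <= #|C0|.

Lemma move_gain_le (r' : rel V) :
  reflexive r' -> symmetric r' -> transitive r' -> forall Pos Neg : V -> V -> nat,
  (forall u v, rdisagree plus r' u v + Pos u v <= rdisagree plus r u v + Neg u v) ->
  \sum_u \sum_v Pos u v <= \sum_u \sum_v Neg u v.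
Proof.
move=> r'_refl r'_sym r'_trans Pos Neg /rcost_pointwise.
by have := r_opt r'_refl r'_sym r'_trans; lia.
Qed.

Lemma r_transb a b c : (r a b && r b c) ==> r a c.
Proof. by apply/implyP => /andP [rab rbc]; apply: r_trans rbc. Qed.

Lemma card_C0_split : #|K| + #|C0 :\: K| = #|C0|.
Proof. by rewrite -(cardsID K C0) (setIidPr KC0). Qed.

Definition merge_gain u v : nat := [&& u \in K, v \in K, ~~ r u v & plus u v].
Definition merge_cut u v : nat := [&& u \in K, v \notin K, r u v & plus u v].
Definition merge_loss u v : nat :=
  [&& u \in K, v \in K, ~~ r u v & ~~ plus u v] + merge_cut u v.

Lemma merge_move :
  \sum_u \sum_v merge_gain u v <= \sum_u \sum_v (merge_loss u v + merge_cut u v).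
Proof.
rewrite -sum2_addT; apply: (move_gain_le (r' := isolate r (fun w => w \in K)));
  [exact: isolate_refl | exact: isolate_sym | exact: isolate_trans | move=> u v].
rewrite /rdisagree /isolate /merge_gain /merge_loss /merge_cut /=.
rewrite (plus_sym v u) (r_sym v u).
case: (eqVneq u v) => [<-|uv]; first by rewrite r_refl /= !andbF.
by case: (u \in K); case: (v \in K); case: (plus u v); case: (r u v).
Qed.

Lemma merge_loss_lt_gain u : u \in K ->
  6 * #|[set v in K | r u v]| + #|C0| <= 6 * #|K| ->
  \sum_v (merge_loss u v + merge_cut u v) < \sum_v merge_gain u v.
Proof.
move=> uK u_small.
have bound v : merge_loss u v + merge_cut u v + (v \in K :\: [set w | r u w]) <=
    merge_gain u v + 2 * (v \in symdiff (Nplus plus u) C0) + 2 * (v \in C0 :\: K).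
  rewrite /merge_loss /merge_cut /merge_gain uK.
  case: (eqVneq v u) => [->|vu]; first by rewrite !inE r_refl uK /= ?andbF.
  rewrite mem_symdiff_Nplus // !inE.
  have := subsetP KC0 v.
  by case: (v \in K) => [/(_ isT) -> |_]; case: (v \in C0); case: (plus u v);
    case: (r u v).
have := leq_sum (index_enum V) (P := xpredT) (fun v _ => bound v).
rewrite !big_split /= !big1_eq !sum_mem_card.
have := cardsID [set w | r u w] K.
have -> : K :&: [set w | r u w] = [set w in K | r u w] by apply/setP => w; rewrite !inE.
(* |K \ [u]| >= |C0|/6 = |C0|/10 + |C0|/15 beats the error terms. *)
have := K_close uK; have := card_C0_split.
lia.
Qed.

Lemma exists_dominant_class x : x \in K ->
  exists2 s0, s0 \in K & 6 * #|K| < 6 * #|[set v in K | r s0 v]| + #|C0|.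
Proof.
move=> xK; apply/exists_inP; apply: contraTT merge_move => /exists_inPn small.
rewrite -ltnNge; apply: (sum_lt_on (P := fun u => u \in K) xK) => u uK.
  by apply: merge_loss_lt_gain; rewrite // leqNgt small.
by rewrite big1 // => v _; rewrite /merge_loss /merge_cut (negbTE uK).
Qed.

Section DominantClass.
Variable s0 : V.
Hypothesis s0K : s0 \in K.
Hypothesis s0_dominant : 6 * #|K| < 6 * #|[set v in K | r s0 v]| + #|C0|.

Definition dominant v := (v \in K) && r s0 v.
Definition stray v := (v \in K) && ~~ r s0 v.
Definition outer v := (v \notin K) && r s0 v.

Definition split_minus u v : nat := [&& dominant u, outer v & ~~ plus u v].
Definition split_plus u v : nat := [&& dominant u, outer v & plus u v].

Lemma split_move :
  \sum_u \sum_v split_minus u v <= \sum_u \sum_v split_plus u v.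
Proof.
rewrite -(leq_pmul2l (isT : 0 < 2)) -!sum2_symmetrize.
apply: (move_gain_le (r' := isolate r dominant));
  [exact: isolate_refl | exact: isolate_sym | exact: isolate_trans | move=> u v].
rewrite /rdisagree /isolate /split_minus /split_plus /dominant /outer (plus_sym v u).
case: (eqVneq u v) => [<-|uv]; first by rewrite r_refl /=; case: (u \in K).
move: (r_transb u s0 v) (r_transb s0 u v) (r_transb s0 v u).
rewrite (r_sym u s0) (r_sym v u).
by case: (u \in K); case: (v \in K); case: (plus u v); case: (r u v);
  case: (r s0 u); case: (r s0 v).
Qed.

Lemma exists_anchor :
  exists2 s, dominant s & \sum_v split_minus s v <= \sum_v split_plus s v.
Proof.
have /existsP [s /andP [s_dom anchor]] :
    [exists s, dominant s && (\sum_v split_minus s v <= \sum_v split_plus s v)].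
  apply: contraTT split_move => /existsPn none; rewrite -ltnNge.
  apply: (sum_lt_on (P := dominant) (x0 := s0)) => [|u u_dom|u u_dom].
  - by rewrite /dominant s0K r_refl.
  - by move: (none u); rewrite u_dom -ltnNge.
  - by rewrite big1 // => v _; rewrite /split_plus (negbTE u_dom).
by exists s.
Qed.

Definition to_s0 u := if stray u then s0 else u.

Definition transfer_gain u v : nat := [&& stray u, ~~ stray v, r s0 v & plus u v].
Definition transfer_loss_in u v : nat := [&& stray u, stray v, u != v & ~~ plus u v].
Definition transfer_loss_out u v : nat :=
  [&& stray u, ~~ stray v, r s0 v & ~~ plus u v] +
  [&& stray u, ~~ stray v, ~~ r s0 v, r u v & plus u v].

Lemma transfer_move :
  \sum_u \sum_v (transfer_gain u v + transfer_gain u v) <=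
  \sum_u \sum_v (transfer_loss_in u v + transfer_loss_out u v + transfer_loss_out u v).
Proof.
rewrite -[in leqLHS]sum2_addT -[in leqRHS]sum2_addT.
apply: (move_gain_le (r' := relpre to_s0 r));
  [move=> u; exact: r_refl | move=> u v; exact: r_sym | exact: relpre_trans | move=> u v].
rewrite /rdisagree /=.
have -> : r (to_s0 u) (to_s0 v) = if stray u then (if stray v then true else r s0 v)
                                  else (if stray v then r s0 u else r u v).
  by rewrite /to_s0; case: (stray u); case: (stray v); rewrite ?r_refl // r_sym.
rewrite /transfer_gain /transfer_loss_in /transfer_loss_out /stray.
rewrite (plus_sym v u) (r_sym v u).
case: (eqVneq u v) => [<-|uv].
  by rewrite r_refl /=; case: (u \in K); case: (r s0 u).
move: (r_transb u s0 v) (r_transb s0 u v) (r_transb s0 v u).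
rewrite (r_sym u s0) (r_sym v u).
by case: (u \in K); case: (v \in K); case: (plus u v); case: (r u v);
  case: (r s0 u); case: (r s0 v).
Qed.

Lemma transfer_vertex_bound s t v : dominant s -> stray t ->
  transfer_loss_in t v + transfer_loss_out t v + transfer_loss_out t v
    + 2 * (v \in [set w in K | r s0 w]) + 2 * split_plus s v <=
  transfer_gain t v + transfer_gain t v + 4 * (v \in symdiff (Nplus plus t) C0)
    + 4 * (v \in symdiff (Nplus plus s) C0) + 2 * (v \in C0 :\: K)
    + 2 * split_minus s v.
Proof.
move=> /andP [sK rs] /andP [tK /negbTE nt].
rewrite /transfer_loss_in /transfer_loss_out /transfer_gain /split_plus /split_minus.
rewrite /dominant /outer /stray sK rs tK nt.
case: (eqVneq v t) => [->|vt]; first by rewrite !inE tK nt eqxx /=; lia.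
have := r_transb s0 v t; rewrite nt implybF => nvt.
rewrite mem_symdiff_Nplus //.
case: (eqVneq v s) => [{vt nvt}->|vs].
  rewrite rs (subsetP KC0 s sK) !inE sK rs /=.
  by case: (plus t s); case: (s \in symdiff (Nplus plus s) C0).
rewrite mem_symdiff_Nplus // !inE [r t v]r_sym /=.
move: (subsetP KC0 v) nvt.
by case: (v \in K) => [/(_ isT) ->|_]; case: (v \in C0); case: (plus t v);
  case: (plus s v); case: (r s0 v); case: (r v t).
Qed.

Lemma transfer_loss_lt_gain s t : dominant s ->
  \sum_v split_minus s v <= \sum_v split_plus s v -> stray t ->
  \sum_v (transfer_loss_in t v + transfer_loss_out t v + transfer_loss_out t v) <
  \sum_v (transfer_gain t v + transfer_gain t v).
Proof.
move=> s_dom anchor t_stray.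
have := leq_sum (index_enum V) (P := xpredT)
  (fun v _ => transfer_vertex_bound v s_dom t_stray).
rewrite !big_split /= !big1_eq !sum_mem_card.
have := K_close (proj1 (andP s_dom)); have := K_close (proj1 (andP t_stray)).
(* 2|S| > 8|C0|/5 beats the error terms 2|C0|/5 + |C0|/15. *)
have := card_C0_split.
lia.
Qed.

Lemma dominant_class_covers : {in K, forall t, r s0 t}.
Proof.
move=> t tK; apply/idPn => nt.
have [s s_dom anchor] := exists_anchor.
have := transfer_move; rewrite leqNgt => /negP; apply.
apply: (sum_lt_on (P := stray) (x0 := t)) => [|u|u u_stray].
- by rewrite /stray tK.
- exact: transfer_loss_lt_gain s_dom anchor.
- rewrite big1 // => v _.
  by rewrite /transfer_loss_in /transfer_loss_out (negbTE u_stray).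
Qed.

End DominantClass.

Lemma core_in_one_class : {in K &, forall x y, r x y}.
Proof.
move=> x y xK yK; have [s0 s0K s0_dominant] := exists_dominant_class xK.
by apply: (r_trans (y := s0)); [rewrite r_sym|]; apply: dominant_class_covers.
Qed.

End CoreInOneClass.

Section Atoms.
Variables (V : finType) (plus : rel V).
Hypothesis plus_sym : symmetric plus.

Lemma optimal_rcost_min (Cs : {set {set V}}) : optimal plus Cs ->
  forall r' : rel V, reflexive r' -> symmetric r' -> transitive r' ->
  rcost plus (same_block Cs) <= rcost plus r'.
Proof.
move=> [_ Cs_min] r' r'_refl r'_sym r'_trans.
have r'_equiv : {in [set: V] & &, equivalence_rel r'}.
  move=> a b c _ _ _; split=> [|rab]; first exact: r'_refl.
  apply/idP/idP => [rac | rbc]; last exact: r'_trans rbc.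
  by apply: r'_trans rac; rewrite r'_sym.
set Q := equivalence_partition r' [set: V].
have Q_part : partition Q [set: V] := equivalence_partitionP r'_equiv.
have same_block_Q u v : same_block Q u v = r' u v.
  have [_ trQ _] := and3P Q_part.
  rewrite /same_block eq_pblock ?(cover_partition Q_part) ?inE //.
  exact: pblock_equivalence_partition.
have -> : rcost plus r' = rcost plus (same_block Q).
  by apply: eq_bigr => u _; apply: eq_bigr => v _; rewrite /rdisagree same_block_Q.
by rewrite -!obj_rcost // leq_pmul2l // Cs_min.
Qed.

Lemma marked_in_cluster (C : {set {set V}}) C0 w :
  trivIset C -> C0 \in C -> w \in C0 ->
  marked plus C w = (1 < #|C0|) &&
    (marked1 plus C0 w || (#|C0| <= 30 * #|[set x in C0 | marked1 plus C0 x]|)).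
Proof. by move=> trC C0C wC0; rewrite /marked (def_pblock trC C0C wC0). Qed.

Definition unmarked_part (C : {set {set V}}) (C0 : {set V}) : {set V} :=
  [set w in C0 | ~~ marked plus C w].

Variables (C : {set {set V}}) (C0 : {set V}).
Hypotheses (trC : trivIset C) (C0C : C0 \in C) (C0_big : 1 < #|C0|).

Lemma unmarked_part_sub : unmarked_part C C0 \subset C0.
Proof. by apply/subsetP => w; rewrite inE => /andP []. Qed.

Lemma unmarked_part_close x : x \in unmarked_part C C0 ->
  20 * #|symdiff (Nplus plus x) C0| <= #|C0|.
Proof.
rewrite inE => /andP [xC0]; rewrite (marked_in_cluster trC C0C xC0) C0_big /=.
by rewrite negb_or => /andP [+ _]; rewrite /marked1 -leqNgt.
Qed.

Lemma unmarked_part_large x : x \in unmarked_part C C0 ->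
  30 * #|C0 :\: unmarked_part C C0| < #|C0|.
Proof.
rewrite inE => /andP [xC0]; rewrite (marked_in_cluster trC C0C xC0) C0_big /=.
rewrite negb_or -ltnNge => /andP [_ few_marked1].
apply: leq_ltn_trans (few_marked1); rewrite leq_mul2l subset_leq_card ?orbT //.
apply/subsetP => w; rewrite !inE => /andP [+ wC0]; rewrite wC0 negbK.
rewrite (marked_in_cluster trC C0C wC0) C0_big /= => /orP [] // many_marked1.
by move: (leq_ltn_trans many_marked1 few_marked1); rewrite ltnn.
Qed.

End Atoms.

Theorem lemma8 (V : finType) (plus : rel V) (plus_sym : symmetric plus)
  (C Cstar : {set {set V}})
  (hC : partition C [set: V])
  (hopt : optimal plus Cstar)
  (h3 : obj plus C <= 3 * obj plus Cstar) :
  forall K, K \in atoms plus C -> exists2 D, D \in Cstar & K \subset D.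
Proof.
have [Cs_part _] := hopt.
have Cs_cover := cover_partition Cs_part.
have in_pblock u : u \in pblock Cstar u by rewrite mem_pblock Cs_cover inE.
have pblock_in u : pblock Cstar u \in Cstar by rewrite pblock_mem ?Cs_cover.
move=> K; rewrite inE => /orP [|/imsetP [u _ ->]]; last first.
  by exists (pblock Cstar u); rewrite ?sub1set.
rewrite inE => /andP [/set0Pn [k0 k0K] /exists_inP [C0 C0C /eqP defK]].
have trC : trivIset C by case/and3P: hC.
exists (pblock Cstar k0) => //; apply/subsetP => y yK.
suff /eqP <- : same_block Cstar y k0 by [].
rewrite -/(unmarked_part plus C C0) in defK; subst K.
case: (leqP #|C0| 1) => [C0_small | C0_big].
  have /subsetP sub := unmarked_part_sub plus C C0.
  by rewrite /same_block (card_le1_eqP C0_small y k0 (sub _ yK) (sub _ k0K)).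
apply: (core_in_one_class plus_sym _ _ _ (optimal_rcost_min plus_sym hopt)
          (unmarked_part_sub plus C C0) (unmarked_part_large trC C0C C0_big k0K)
          (unmarked_part_close trC C0C C0_big)) yK k0K.
- by move=> a; rewrite /same_block.
- by move=> a b; rewrite /same_block eq_sym.
- by move=> b a c; rewrite /same_block => /eqP ->.
Qed.
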